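(* Let $G$ be an undirected, connected graph on $N\ge2$ vertices with Laplacian $L$ and degree matrix $D=\operatorname{diag}(|\mathcal N_1|,\dots,|\mathcal N_N|)$. Fix weights $w_1,w_2,w_3>0$. For $h>0$ define \[ a^h=\frac{w_1h^2}{2\left(w_3+w_2h^2+w_1\frac{h^4}{4}\right)},\qquad b^h=\frac{w_2h+w_1\frac{h^3}{2}}{w_3+w_2h^2+w_1\frac{h^4}{4}}, \] and for an eigenvalue $\lambda_i$ of $D^{-1}L$ define \[ Q_i^h=\begin{bmatrix}1-\frac{h^2}{2}a^h\lambda_i & h-\frac{h^2}{2}b^h\\ -ha^h\lambda_i & 1-hb^h\end{bmatrix}. \] Then for every eigenvalue $\lambda_i>0$ of $D^{-1}L$ there exists $h_i>0$ such that $\rho(Q_i^h)<1$ for all $h\in(0,h_i)$, where $\rho$ denotes the spectral radius.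
   Context: $\mathcal N_i$ is the set of neighbors of vertex $i$ and $|\mathcal N_i|$ its degree. Since the graph is connected, $D$ is invertible. The eigenvalues of $D^{-1}L$ are real and satisfy $0=\lambda_1<\lambda_2\le\dots\le\lambda_N\le2$. *)

From HB Require Import structures.
From mathcomp Require Import all_boot all_order all_algebra.
From mathcomp Require Import complex.
Set Implicit Arguments. Unset Strict Implicit. Unset Printing Implicit Defensive.
Import Order.TTheory GRing.Theory Num.Theory.
Local Open Scope ring_scope.

Definition simple_graph (N : nat) (e : rel 'I_N) : Prop :=
  (forall i j, e i j = e j i) /\ (forall i, e i i = false).

Definition connected_graph (N : nat) (e : rel 'I_N) : Prop :=
  forall i j, connect e i j.

Definition degree (N : nat) (e : rel 'I_N) (i : 'I_N) : nat := #|[set j | e i j]|.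

Definition adjacency_mx (R : nzRingType) (N : nat) (e : rel 'I_N) : 'M[R]_N :=
  \matrix_(i, j) (e i j)%:R.

Definition degree_mx (R : nzRingType) (N : nat) (e : rel 'I_N) : 'M[R]_N :=
  \matrix_(i, j) ((i == j)%:R * (degree e i)%:R).

Definition laplacian_mx (R : nzRingType) (N : nat) (e : rel 'I_N) : 'M[R]_N :=
  degree_mx R e - adjacency_mx R e.

(* Complex roots (with multiplicity) of the characteristic polynomial of a real
   matrix, i.e. its complex eigenvalues. *)
Definition cmx_eigenvalues (R : rcfType) (n : nat) (A : 'M[R]_n) : seq R[i] :=
  sval (closed_field_poly_normal (char_poly (map_mx (fun x : R => (x%:C)%C) A))).

Definition spectral_radius (R : rcfType) (n : nat) (A : 'M[R]_n) : R :=
  \big[Num.max/0]_(z <- cmx_eigenvalues A) Normc.normc z.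

Definition a_h (R : fieldType) (w1 w2 w3 h : R) : R :=
  w1 * h ^+ 2 / (2 * (w3 + w2 * h ^+ 2 + w1 * h ^+ 4 / 4)).

Definition b_h (R : fieldType) (w1 w2 w3 h : R) : R :=
  (w2 * h + w1 * h ^+ 3 / 2) / (w3 + w2 * h ^+ 2 + w1 * h ^+ 4 / 4).

Definition mx2 (R : Type) (a b c d : R) : 'M[R]_2 :=
  \matrix_(i < 2, j < 2)
    (if (i : nat) == 0%N then (if (j : nat) == 0%N then a else b)
     else (if (j : nat) == 0%N then c else d)).

Definition Q_h (R : fieldType) (w1 w2 w3 h lam : R) : 'M[R]_2 :=
  let a := a_h w1 w2 w3 h in let b := b_h w1 w2 w3 h in
  mx2 (1 - h ^+ 2 / 2 * a * lam) (h - h ^+ 2 / 2 * b)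
      (- (h * a * lam))         (1 - h * b).

From HB Require Import structures.
From mathcomp Require Import all_boot all_order all_algebra.
From mathcomp Require Import complex ring lra.
Set Implicit Arguments. Unset Strict Implicit. Unset Printing Implicit Defensive.
Import Order.TTheory GRing.Theory Num.Theory.
Local Open Scope ring_scope.

(* The eigenvalues of a real 2x2 matrix with trace t and determinant d are the
   roots of z^2 - t z + d.  By the Schur-Cohn (Jury) test they lie in the open
   unit disc once d < 1 and the polynomial is positive at 1 and at -1: non-real
   roots have squared modulus d, real roots are trapped in (-1, 1).  For Q_i^h,
   with p = h b^h and q = h^2 a^h lambda_i, the trace is 2 - p - q/2 and the
   determinant 1 - p + q/2, so the test reads 0 < q < 2p and p < 2.  Clearing
   the common denominator w3 + w2 h^2 + w1 h^4/4 of a^h and b^h, p < 2 holds for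
   every h and 0 < q < 2p as soon as 0 < h and w1 lambda_i h^2 < 4 w2. *)

Lemma mxtrace_mx2 (R : pzSemiRingType) (A : 'M[R]_2) : \tr A = A 0 0 + A 1 1.
Proof.
rewrite /mxtrace !big_ord_recl big_ord0 addr0.
by congr (A _ _ + A _ _); apply/val_inj.
Qed.

Lemma det_mx2 (R : comPzRingType) (A : 'M[R]_2) :
  \det A = A 0 0 * A 1 1 - A 0 1 * A 1 0.
Proof.
rewrite (expand_det_row A 0) !big_ord_recl big_ord0 /cofactor !det_mx11 !mxE /=.
have -> : lift 0 (0 : 'I_1) = 1 :> 'I_2 by apply/val_inj.
have -> : lift (1 : 'I_2) (0 : 'I_1) = 0 :> 'I_2 by apply/val_inj.
have -> : (ord0 : 'I_2) = 0 by apply/val_inj.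
rewrite /= expr0 expr1 addr0; ring.
Qed.

Lemma char_poly_mx2 (R : comNzRingType) (A : 'M[R]_2) :
  char_poly A = 'X^2 - (\tr A)%:P * 'X + (\det A)%:P.
Proof.
rewrite /char_poly !det_mx2 mxtrace_mx2 /char_poly_mx !mxE /=.
rewrite polyCD polyCB !polyCM; ring.
Qed.

Lemma cmx_eigenvalues_mx2 (R : rcfType) (A : 'M[R]_2) (z : R[i]) :
  z \in cmx_eigenvalues A -> (z ^+ 2 - (\tr A)%:C * z + (\det A)%:C = 0)%C.
Proof.
rewrite /cmx_eigenvalues; case: closed_field_poly_normal => r /= char_polyE zr.
have : root (char_poly (map_mx (real_complex R) A)) z.
  rewrite char_polyE rootZ ?root_prod_XsubC //.
  by rewrite lead_coef_eq0 monic_neq0 // char_poly_monic.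
by rewrite char_poly_mx2 trace_map_mx det_map_mx /root !hornerE => /eqP.
Qed.

Section SchurCohn.
Variables (R : rcfType) (t d : R).
Hypotheses (d_lt1 : d < 1) (at1_gt0 : 0 < 1 - t + d) (atN1_gt0 : 0 < 1 + t + d).

Lemma schur_cohn_real_root (x : R) : x ^+ 2 - t * x + d = 0 -> -1 < x < 1.
Proof.
move=> px0; set x' := t - x.
have prodE : x * x' = d by rewrite /x' -[d]subr0 -px0; ring.
have at1E : 1 - t + d = (1 - x) * (1 - x') by rewrite -prodE /x'; ring.
have atN1E : 1 + t + d = (1 + x) * (1 + x') by rewrite -prodE /x'; ring.
move: d_lt1 at1_gt0 atN1_gt0; rewrite at1E atN1E -prodE => xx'_lt1 at1 atN1.
by apply/andP; split; rewrite ltNge; apply/negP => hx; nra.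
Qed.

Lemma schur_cohn_root (z : R[i]) :
  (z ^+ 2 - t%:C * z + d%:C = 0)%C -> Normc.normc z < 1.
Proof.
case: z => x y; rewrite expr2; simpc => /eqP; rewrite eq_complex /=.
case/andP => /eqP reE /eqP imE.
rewrite -sqrtr1 ltr_sqrt ?ltr01 //.
have [y0|y_neq0] := eqVneq y 0.
  have /andP[] : -1 < x < 1 by apply: schur_cohn_real_root; rewrite -reE y0; ring.
  by rewrite y0; nra.
have /eqP : y * (x *+ 2 - t) = 0 by rewrite -imE; ring.
rewrite mulf_eq0 (negbTE y_neq0) subr_eq0 => /eqP tE.
have normE : x ^+ 2 + y ^+ 2 = d by rewrite -[d]subr0 -reE -tE; ring.
by rewrite normE.
Qed.
End SchurCohn.

Lemma spectral_radius_lt (R : rcfType) (n : nat) (A : 'M[R]_n) (r : R) :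
  0 < r -> {in cmx_eigenvalues A, forall z, Normc.normc z < r} ->
  spectral_radius A < r.
Proof.
move=> r_gt0 eig_lt; rewrite /spectral_radius big_seq.
apply: (big_ind (fun x => x < r)) => [//|x y x_lt y_lt|z /eig_lt //].
by rewrite gt_max x_lt y_lt.
Qed.

Lemma spectral_radius_mx2_lt1 (R : rcfType) (A : 'M[R]_2) :
  \det A < 1 -> 0 < 1 - \tr A + \det A -> 0 < 1 + \tr A + \det A ->
  spectral_radius A < 1.
Proof.
move=> det_lt1 at1_gt0 atN1_gt0; apply: spectral_radius_lt => // z.
by move/cmx_eigenvalues_mx2; apply: schur_cohn_root.
Qed.

Lemma mxtrace_Q_h (R : numFieldType) (w1 w2 w3 h lam : R) :
  \tr (Q_h w1 w2 w3 h lam) =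
    2 - h * b_h w1 w2 w3 h - h ^+ 2 * a_h w1 w2 w3 h * lam / 2.
Proof. by rewrite mxtrace_mx2 !mxE /=; field. Qed.

Lemma det_Q_h (R : numFieldType) (w1 w2 w3 h lam : R) :
  \det (Q_h w1 w2 w3 h lam) =
    1 - h * b_h w1 w2 w3 h + h ^+ 2 * a_h w1 w2 w3 h * lam / 2.
Proof. by rewrite det_mx2 !mxE /=; field. Qed.

Section Weights.
Variables (R : realFieldType) (w1 w2 w3 : R).
Hypotheses (w1_gt0 : 0 < w1) (w2_gt0 : 0 < w2) (w3_gt0 : 0 < w3).

Let denom h := w3 + w2 * h ^+ 2 + w1 * h ^+ 4 / 4.

Let w2_sqr_ge0 h : 0 <= w2 * h ^+ 2.
Proof. by rewrite mulr_ge0 ?exprn_even_ge0 ?ltW. Qed.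

Let w1_exp4_ge0 h : 0 <= w1 * h ^+ 4.
Proof. by rewrite mulr_ge0 ?exprn_even_ge0 ?ltW. Qed.

Let denom_gt0 h : 0 < denom h.
Proof. by rewrite /denom !ltr_wpDr ?divr_ge0. Qed.

Let mulr_denom_b_h h : h * b_h w1 w2 w3 h * denom h = w2 * h ^+ 2 + w1 * h ^+ 4 / 2.
Proof. by rewrite /b_h -/(denom h); field; rewrite gt_eqF. Qed.

Let mulr_denom_a_h h : h ^+ 2 * a_h w1 w2 w3 h * denom h = w1 * h ^+ 4 / 2.
Proof. by rewrite /a_h -/(denom h); field; rewrite gt_eqF. Qed.

Lemma mulr_b_h_lt2 h : h * b_h w1 w2 w3 h < 2.
Proof.
rewrite -(ltr_pM2r (denom_gt0 h)) mulr_denom_b_h /denom.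
move: w3_gt0 (w2_sqr_ge0 h); lra.
Qed.

Lemma mulr_a_h_gt0 h : h != 0 -> 0 < h ^+ 2 * a_h w1 w2 w3 h.
Proof.
move=> h_neq0; rewrite -(ltr_pM2r (denom_gt0 h)) mul0r mulr_denom_a_h.
by rewrite divr_gt0 // mulr_gt0 // exprn_even_gt0 // h_neq0 orbT.
Qed.

Lemma mulr_a_h_lt_b_h h lam : h != 0 -> w1 * lam * h ^+ 2 < 4 * w2 ->
  h ^+ 2 * a_h w1 w2 w3 h * lam < 2 * (h * b_h w1 w2 w3 h).
Proof.
move=> h_neq0 small_h.
rewrite -(ltr_pM2r (denom_gt0 h)) mulrAC mulr_denom_a_h -[2 * _ * _]mulrA mulr_denom_b_h.
have h2_gt0 : 0 < h ^+ 2 by rewrite exprn_even_gt0 ?h_neq0 ?orbT.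
have h4E : h ^+ 4 = h ^+ 2 * h ^+ 2 by rewrite -exprD.
move: (w1_exp4_ge0 h); rewrite h4E; nra.
Qed.

End Weights.

Lemma spectral_radius_Q_h_lt1 (R : rcfType) (w1 w2 w3 h lam : R) :
  0 < w1 -> 0 < w2 -> 0 < w3 -> 0 < lam -> h != 0 ->
  w1 * lam * h ^+ 2 < 4 * w2 -> spectral_radius (Q_h w1 w2 w3 h lam) < 1.
Proof.
move=> w1_gt0 w2_gt0 w3_gt0 lam_gt0 h_neq0 small_h.
have b_h_lt2 := mulr_b_h_lt2 w1_gt0 w2_gt0 w3_gt0 h.
have a_h_gt0 : 0 < h ^+ 2 * a_h w1 w2 w3 h * lam by rewrite mulr_gt0 ?mulr_a_h_gt0.
have a_h_lt_b_h := mulr_a_h_lt_b_h w1_gt0 w2_gt0 w3_gt0 h_neq0 small_h.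
by apply: spectral_radius_mx2_lt1; rewrite ?mxtrace_Q_h det_Q_h; lra.
Qed.

Theorem lemma1 (R : rcfType) (N : nat) (e : rel 'I_N)
  (hN : (2 <= N)%N) (hsimple : simple_graph e) (hconn : connected_graph e)
  (w1 w2 w3 : R) (hw1 : 0 < w1) (hw2 : 0 < w2) (hw3 : 0 < w3) :
  forall lam : R,
    eigenvalue (invmx (degree_mx R e) *m laplacian_mx R e) lam -> 0 < lam ->
    exists hi : R, 0 < hi /\
      forall h : R, 0 < h -> h < hi -> spectral_radius (Q_h w1 w2 w3 h lam) < 1.
Proof.
move=> lam _ lam_gt0.
have bound_gt0 : 0 < 4 * w2 / (w1 * lam) by rewrite divr_gt0 ?mulr_gt0.
exists (Num.sqrt (4 * w2 / (w1 * lam))); split; first by rewrite sqrtr_gt0.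
move=> h h_gt0 h_lt; apply: spectral_radius_Q_h_lt1; rewrite ?gt_eqF //.
by rewrite mulrC -ltr_pdivlMr ?mulr_gt0 // -ltr_sqrt // sqrtr_sqr gtr0_norm.
Qed.
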